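(* For $a>0$ define $P_1:\mathbb{R}^{3\times3}\to\mathbb{R}$ by $P_1(R)=\sqrt{\|R^TR-I\|_F^2+a}$. Then $P_1$ is twice differentiable with locally Lipschitz second derivatives, and there is a constant $L$ (depending on $a$) such that $P_1$ is $L$-curvature bounded.
   Context: $\|\cdot\|_F$ is the Frobenius norm and $R$ is identified with a vector in $\mathbb{R}^9$. A function $\phi$ is $L$-curvature bounded if $\phi(x)+\frac L2\|x\|^2$ is convex and $\|\nabla\phi(x)-\nabla\phi(x')\|\le L\|x-x'\|$ for all $x,x'$. *)

From HB Require Import structures.
From mathcomp Require Import all_boot all_order all_algebra.
From mathcomp Require Import all_classical all_reals all_analysis.
Set Implicit Arguments. Unset Strict Implicit. Unset Printing Implicit Defensive.
Import Order.TTheory GRing.Theory Num.Theory.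
Import numFieldNormedType.Exports.
Local Open Scope ring_scope.

Definition frob {R : realType} (A : 'M[R]_3) : R :=
  Num.sqrt (\sum_(i < 3) \sum_(j < 3) A i j ^+ 2).

Definition P1 {R : realType} (a : R) (X : 'M[R]_3) : R :=
  Num.sqrt (frob (X^T *m X - 1%:M) ^+ 2 + a).

Definition grad {R : realType} (f : 'M[R]_3 -> R) (x : 'M[R]_3) : 'M[R]_3 :=
  \matrix_(i, j) ('D_(delta_mx i j) f x).

Definition convex_fun {R : realType} (g : 'M[R]_3 -> R) : Prop :=
  forall (x y : 'M[R]_3) (t : R), 0 <= t -> t <= 1 ->
    g (t *: x + (1 - t) *: y) <= t * g x + (1 - t) * g y.

Definition curvature_bounded {R : realType} (L : R) (phi : 'M[R]_3 -> R) : Prop :=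
  convex_fun (fun x => phi x + L / 2 * frob x ^+ 2) /\
  forall x x' : 'M[R]_3, frob (grad phi x - grad phi x') <= L * frob (x - x').

(* Twice (Frechet) differentiable: f is differentiable everywhere and every
   directional derivative x |-> Df(x)v is differentiable everywhere
   (in finite dimension this is differentiability of x |-> Df(x)). *)
Definition twice_differentiable {R : realType} (f : 'M[R]_3 -> R) : Prop :=
  (forall x, differentiable f x) /\
  (forall (v x : 'M[R]_3), differentiable (fun y => 'D_v f y) x).

Definition locally_lipschitz {R : realType} (g : 'M[R]_3 -> R) : Prop :=
  forall x : 'M[R]_3, exists r : R, exists K : R, 0 < r /\
    forall y z : 'M[R]_3, frob (y - x) < r -> frob (z - x) < r ->
      `|g y - g z| <= K * frob (y - z).

(* Second derivative D^2 f(x)(u,v) = D_u (D_v f)(x) is locally Lipschitz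
   (as a bilinear-form-valued map: equivalently, each of its entries). *)
Definition second_deriv_locally_lipschitz {R : realType} (f : 'M[R]_3 -> R) : Prop :=
  forall u v : 'M[R]_3, locally_lipschitz (fun x => 'D_u (fun y => 'D_v f y) x).

(* Write S := X^T X - 1 and P := P1 a X = sqrt (|S|^2 + a).  The derivatives of P are
   explicit: DP(X)v = <S, dS> / P with dS = v^T X + X^T v, and D^2P(X)(u,v) combines
   <dS u, dS v> and <S, u^T v + v^T u> divided by P with <S, dS u> <S, dS v> divided by
   P^3.  Since |S| <= P and |X|^2 = tr S + 3 <= (sqrt 3 + 3 / sqrt a) P, each term is
   bounded by a constant times |u| |v|, uniformly in X.  Such a uniform bound L on the
   second derivative yields both the L-Lipschitz gradient (mean value theorem along
   segments) and the convexity of P + L/2 |X|^2 (nonnegative second derivative along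
   lines).  D^2P is locally Lipschitz because it is built from polynomials and 1/P,
   where P >= sqrt a. *)

From HB Require Import structures.
From mathcomp Require Import all_boot all_order all_algebra.
From mathcomp Require Import all_classical all_reals all_analysis.
From mathcomp Require Import ring lra.
Import Order.TTheory GRing.Theory Num.Theory.
Import numFieldNormedType.Exports.
Local Open Scope ring_scope.
Set Implicit Arguments. Unset Strict Implicit. Unset Printing Implicit Defensive.

Section FiniteCauchySchwarz.
Variables (R : realDomainType) (I : finType).

Lemma sqr_sum_mul_le (f g : I -> R) :
  (\sum_i f i * g i) ^+ 2 <= (\sum_i f i ^+ 2) * (\sum_i g i ^+ 2).
Proof.
have lagrange : \sum_i \sum_j (f i * g j - f j * g i) ^+ 2 =
    2 * ((\sum_i f i ^+ 2) * (\sum_i g i ^+ 2) - (\sum_i f i * g i) ^+ 2).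
  have sum_mul_sum (h k : I -> R) :
      \sum_i \sum_j h i * k j = (\sum_i h i) * (\sum_j k j).
    by rewrite big_distrlr.
  transitivity (\sum_i \sum_j (f i ^+ 2 * g j ^+ 2 + g i ^+ 2 * f j ^+ 2
                               - (2 * (f i * g i)) * (f j * g j))).
    by apply: eq_bigr => i _; apply: eq_bigr => j _; ring.
  under eq_bigr => i _ do rewrite sumrB big_split /=.
  rewrite sumrB big_split /= !sum_mul_sum -mulr_sumr expr2; ring.
have : 0 <= \sum_i \sum_j (f i * g j - f j * g i) ^+ 2.
  by apply: sumr_ge0 => i _; apply: sumr_ge0 => j _; exact: sqr_ge0.
by rewrite lagrange pmulr_rge0 // subr_ge0.
Qed.

End FiniteCauchySchwarz.

Section FrobeniusInnerProduct.
Variable R : realDomainType.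

Definition mxdot m n (A B : 'M[R]_(m, n)) : R := \sum_i \sum_j A i j * B i j.

Variables m n : nat.
Implicit Types A B C : 'M[R]_(m, n).

Lemma mxdotC A B : mxdot A B = mxdot B A.
Proof. by apply: eq_bigr => i _; apply: eq_bigr => j _; rewrite mulrC. Qed.

Lemma mxdotDl A B C : mxdot (A + B) C = mxdot A C + mxdot B C.
Proof.
rewrite /mxdot -big_split; apply: eq_bigr => i _; rewrite -big_split.
by apply: eq_bigr => j _; rewrite mxE mulrDl.
Qed.

Lemma mxdotZl c A B : mxdot (c *: A) B = c * mxdot A B.
Proof.
rewrite /mxdot mulr_sumr; apply: eq_bigr => i _; rewrite mulr_sumr.
by apply: eq_bigr => j _; rewrite mxE mulrA.
Qed.

Lemma mxdotNl A B : mxdot (- A) B = - mxdot A B.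
Proof. by rewrite -scaleN1r mxdotZl mulN1r. Qed.

Lemma mxdotBl A B C : mxdot (A - B) C = mxdot A C - mxdot B C.
Proof. by rewrite mxdotDl mxdotNl. Qed.

Lemma mxdotDr A B C : mxdot A (B + C) = mxdot A B + mxdot A C.
Proof. by rewrite mxdotC mxdotDl !(mxdotC A). Qed.

Lemma mxdotZr c A B : mxdot A (c *: B) = c * mxdot A B.
Proof. by rewrite mxdotC mxdotZl mxdotC. Qed.

Lemma mxdotBr A B C : mxdot A (B - C) = mxdot A B - mxdot A C.
Proof. by rewrite mxdotC mxdotBl !(mxdotC A). Qed.

Lemma mxdot0r A : mxdot A 0 = 0.
Proof. by rewrite -(scale0r 0) mxdotZr mul0r. Qed.

Lemma mxdotE A B : mxdot A B = \sum_(p : 'I_m * 'I_n) A p.1 p.2 * B p.1 p.2.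
Proof. by rewrite /mxdot pair_bigA. Qed.

Lemma mxdotii A : mxdot A A = \sum_i \sum_j A i j ^+ 2.
Proof. by apply: eq_bigr => i _; apply: eq_bigr => j _; rewrite expr2. Qed.

Lemma mxdotii_ge0 A : 0 <= mxdot A A.
Proof.
by rewrite mxdotii; apply: sumr_ge0 => i _; apply: sumr_ge0 => j _; exact: sqr_ge0.
Qed.

Lemma sqr_mxdot_le A B : mxdot A B ^+ 2 <= mxdot A A * mxdot B B.
Proof.
have sqrE C : mxdot C C = \sum_(p : 'I_m * 'I_n) C p.1 p.2 ^+ 2.
  by rewrite mxdotE; apply: eq_bigr => p _; rewrite expr2.
by rewrite !sqrE mxdotE; exact: sqr_sum_mul_le.
Qed.

Lemma sqr_entry_le_mxdot A i j : A i j ^+ 2 <= mxdot A A.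
Proof.
rewrite mxdotii (bigD1 i) //= (bigD1 j) //= -addrA lerDl.
by apply: addr_ge0; apply: sumr_ge0 => *; rewrite ?sumr_ge0 // => *; exact: sqr_ge0.
Qed.

Lemma mxdot_tr A B : mxdot A^T B^T = mxdot A B.
Proof.
rewrite /mxdot exchange_big; apply: eq_bigr => i _; apply: eq_bigr => j _.
by rewrite !mxE.
Qed.

End FrobeniusInnerProduct.

Lemma mxdot_mulmx_le (R : realDomainType) m n p
    (A : 'M[R]_(m, n)) (B : 'M[R]_(n, p)) :
  mxdot (A *m B) (A *m B) <= mxdot A A * mxdot B B.
Proof.
have -> : mxdot A A * mxdot B B =
    \sum_i \sum_j ((\sum_k A i k ^+ 2) * (\sum_k B k j ^+ 2)).
  by rewrite !mxdotii [in X in _ * X]exchange_big big_distrlr.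
rewrite mxdotii; apply: ler_sum => i _; apply: ler_sum => j _; rewrite !mxE.
exact: sqr_sum_mul_le.
Qed.

Lemma sqr_mxtrace_le (R : realDomainType) n (A : 'M[R]_n) :
  (\tr A) ^+ 2 <= n%:R * mxdot A A.
Proof.
have := sqr_sum_mul_le (fun _ : 'I_n => 1) (fun i => A i i).
under eq_bigr => i _ do rewrite mul1r.
under [\sum_i 1 ^+ 2]eq_bigr => i _ do rewrite expr1n.
rewrite sumr_const card_ord => /le_trans; apply; rewrite ler_wpM2l //.
rewrite mxdotii; apply: ler_sum => i _.
rewrite (bigD1 i) //= lerDl; apply: sumr_ge0 => j _; exact: sqr_ge0.
Qed.

Section Frobenius.
Variable R : realType.
Implicit Types A B : 'M[R]_3.

Lemma frob_sqr A : frob A ^+ 2 = mxdot A A.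
Proof. by rewrite /frob sqr_sqrtr -mxdotii ?mxdotii_ge0. Qed.

Lemma frob_ge0 A : 0 <= frob A.
Proof. exact: sqrtr_ge0. Qed.

Lemma frob0 : frob (0 : 'M[R]_3) = 0.
Proof. by apply/eqP; rewrite -sqrf_eq0 frob_sqr mxdot0r. Qed.

Lemma ler_frob_sqr (x : R) A : 0 <= x -> (frob A <= x) = (mxdot A A <= x ^+ 2).
Proof. by move=> x0; rewrite -frob_sqr ler_sqr ?nnegrE ?frob_ge0. Qed.

Lemma normr_mxdot_le A B : `|mxdot A B| <= frob A * frob B.
Proof.
rewrite -ler_sqr ?nnegrE ?mulr_ge0 ?frob_ge0 //.
by rewrite real_normK ?num_real // exprMn !frob_sqr sqr_mxdot_le.
Qed.

Lemma frobD A B : frob (A + B) <= frob A + frob B.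
Proof.
rewrite ler_frob_sqr ?addr_ge0 ?frob_ge0 // mxdotDl !mxdotDr sqrrD !frob_sqr.
have := ler_norm (mxdot A B); have := normr_mxdot_le A B.
rewrite (mxdotC B A); lra.
Qed.

Lemma frob_tr A : frob A^T = frob A.
Proof. by rewrite /frob -!mxdotii mxdot_tr. Qed.

Lemma frob_mulmx A B : frob (A *m B) <= frob A * frob B.
Proof.
by rewrite ler_frob_sqr ?mulr_ge0 ?frob_ge0 // exprMn !frob_sqr mxdot_mulmx_le.
Qed.

Lemma normr_entry_le_frob A i j : `|A i j| <= frob A.
Proof.
rewrite -ler_sqr ?nnegrE ?frob_ge0 //.
by rewrite real_normK ?num_real // frob_sqr sqr_entry_le_mxdot.
Qed.

Lemma normr_mxtrace_le A : `|\tr A| <= Num.sqrt 3 * frob A.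
Proof.
rewrite -ler_sqr ?nnegrE ?mulr_ge0 ?sqrtr_ge0 ?frob_ge0 //.
by rewrite real_normK ?num_real // exprMn sqr_sqrtr // frob_sqr sqr_mxtrace_le.
Qed.

End Frobenius.

Section ExplicitDerivative.
Variables (R : realType) (V : normedModType R).
Implicit Types (f g : V -> R) (df dg : V -> V -> R).

Definition has_deriv f df :=
  forall x, differentiable f x /\ forall v, 'D_v f x = df x v.

Lemma has_deriv_is_derive f df x v : has_deriv f df -> is_derive x v f (df x v).
Proof. by move=> /(_ x) [fx <-]; apply: DeriveDef => //; exact: diff_derivable. Qed.

Lemma eq_has_deriv f g df dg : has_deriv f df ->
  f =1 g -> (forall x v, df x v = dg x v) -> has_deriv g dg.
Proof.
move=> H /funext <- edf x; have [fx dfx] := H x.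
by split => // v; rewrite dfx edf.
Qed.

Lemma has_deriv_cst (c : R) : has_deriv (fun=> c) (fun _ _ => 0).
Proof. by move=> x; split=> [|v]; [exact: differentiable_cst | exact: derive_cst]. Qed.

Lemma has_derivD f g df dg : has_deriv f df -> has_deriv g dg ->
  has_deriv (fun y => f y + g y) (fun x v => df x v + dg x v).
Proof.
move=> Hf Hg x; have [fx dfx] := Hf x; have [gx dgx] := Hg x.
split=> [|v]; first exact: differentiableD.
by rewrite -dfx -dgx; exact: (deriveD (diff_derivable fx) (diff_derivable gx)).
Qed.

Lemma has_derivN f df : has_deriv f df ->
  has_deriv (fun y => - f y) (fun x v => - df x v).
Proof.
move=> Hf x; have [fx dfx] := Hf x.
split=> [|v]; first exact: differentiableN.
by rewrite -dfx; exact: (deriveN (diff_derivable fx)).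
Qed.

Lemma has_derivB f g df dg : has_deriv f df -> has_deriv g dg ->
  has_deriv (fun y => f y - g y) (fun x v => df x v - dg x v).
Proof. by move=> Hf Hg; apply: has_derivD => //; exact: has_derivN. Qed.

Lemma has_derivM f g df dg : has_deriv f df -> has_deriv g dg ->
  has_deriv (fun y => f y * g y) (fun x v => df x v * g x + f x * dg x v).
Proof.
move=> Hf Hg x; have [fx dfx] := Hf x; have [gx dgx] := Hg x.
split=> [|v]; first exact: differentiableM.
rewrite -dfx -dgx (deriveM (diff_derivable fx) (diff_derivable gx)).
by rewrite /GRing.scale /=; ring.
Qed.

Lemma has_deriv_sum n (F : 'I_n -> V -> R) dF :
  (forall k, has_deriv (F k) (dF k)) ->
  has_deriv (fun y => \sum_k F k y) (fun x v => \sum_k dF k x v).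
Proof.
move=> H x; have -> : (fun y => \sum_k F k y) = \sum_k F k.
  by apply/funext => y; rewrite fct_sumE.
split=> [|v]; first exact: differentiable_sum (fun k => (H k x).1).
have D := is_derive_sum (fun k => has_deriv_is_derive x v (H k)).
by rewrite derive_val.
Qed.

Lemma has_derivV f df : has_deriv f df -> (forall x, f x != 0) ->
  has_deriv (fun y => (f y)^-1) (fun x v => - (f x) ^- 2 * df x v).
Proof.
move=> Hf nz x; have [fx dfx] := Hf x.
split=> [|v]; first exact: differentiableV.
by rewrite -dfx deriveV //; exact: diff_derivable.
Qed.

Lemma has_deriv_sqrt f df : has_deriv f df -> (forall x, 0 < f x) ->
  has_deriv (fun y => Num.sqrt (f y)) (fun x v => df x v / (2 * Num.sqrt (f x))).
Proof.
move=> Hf pos x; have [fx dfx] := Hf x.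
have sqrt_fx := is_derive1_sqrt (pos x).
have dsqrt : differentiable (@Num.sqrt R) (f x).
  by apply/derivable1_diffP; case: sqrt_fx.
have dcomp : differentiable (Num.sqrt \o f) x by exact: differentiable_comp.
split=> [|v]; first exact: dcomp.
rewrite -dfx (deriveE v dcomp) (diff_comp fx dsqrt) /= diff1E // -deriveE //.
by rewrite derive1E derive_val.
Qed.

Lemma has_deriv_line f df (x d : V) (s : R) : has_deriv f df ->
  is_derive s 1 (fun t => f (t *: d + x)) (df (s *: d + x) d).
Proof.
move=> /(has_deriv_is_derive (s *: d + x) d) [fd <-].
have quotE : (fun h : R => h^-1 *: (((fun t => f (t *: d + x)) \o shift s) (h *: 1)
                                   - f (s *: d + x)))
    = (fun h : R => h^-1 *: ((f \o shift (s *: d + x)) (h *: d) - f (s *: d + x))).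
  by apply/funext => h /=; rewrite [h *: 1]mulr1 scalerDl addrA.
by split; rewrite /derivable /derive quotE.
Qed.

Lemma has_deriv_line_continuous f df (x d : V) : has_deriv f df ->
  continuous (fun t : R => f (t *: d + x)).
Proof.
move=> H s; have [fd _] := has_deriv_line x d s H.
by apply: differentiable_continuous; apply/derivable1_diffP.
Qed.

End ExplicitDerivative.

Section ExplicitMatrixDerivative.
Variables (R : realType) (V : normedModType R).

Definition has_mxderiv m n (F : V -> 'M[R]_(m, n)) (dF : V -> V -> 'M[R]_(m, n)) :=
  forall i j, has_deriv (fun y => F y i j) (fun x v => dF x v i j).

Lemma has_mxderiv_cst m n (C : 'M[R]_(m, n)) : has_mxderiv (fun=> C) (fun _ _ => 0).
Proof.
by move=> i j; apply: eq_has_deriv (has_deriv_cst _) _ _ => // x v; rewrite mxE.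
Qed.

Lemma has_mxderiv_tr m n (F : V -> 'M[R]_(m, n)) dF : has_mxderiv F dF ->
  has_mxderiv (fun y => (F y)^T) (fun x v => (dF x v)^T).
Proof. by move=> H i j; apply: eq_has_deriv (H j i) _ _ => [x|x v]; rewrite mxE. Qed.

Lemma has_mxderivD m n (F G : V -> 'M[R]_(m, n)) dF dG :
  has_mxderiv F dF -> has_mxderiv G dG ->
  has_mxderiv (fun y => F y + G y) (fun x v => dF x v + dG x v).
Proof.
move=> HF HG i j; apply: eq_has_deriv (has_derivD (HF i j) (HG i j)) _ _ => [x|x v];
by rewrite mxE.
Qed.

Lemma has_mxderivB m n (F G : V -> 'M[R]_(m, n)) dF dG :
  has_mxderiv F dF -> has_mxderiv G dG ->
  has_mxderiv (fun y => F y - G y) (fun x v => dF x v - dG x v).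
Proof.
move=> HF HG i j; apply: eq_has_deriv (has_derivB (HF i j) (HG i j)) _ _ => [x|x v];
by rewrite !mxE.
Qed.

Lemma has_mxderivM m n p (F : V -> 'M[R]_(m, n)) (G : V -> 'M[R]_(n, p)) dF dG :
  has_mxderiv F dF -> has_mxderiv G dG ->
  has_mxderiv (fun y => F y *m G y) (fun x v => dF x v *m G x + F x *m dG x v).
Proof.
move=> HF HG i j.
have := has_deriv_sum (fun k => has_derivM (HF i k) (HG k j)).
by move/eq_has_deriv; apply=> [x|x v]; rewrite !mxE // -big_split.
Qed.

Lemma has_deriv_mxdot m n (F G : V -> 'M[R]_(m, n)) dF dG :
  has_mxderiv F dF -> has_mxderiv G dG ->
  has_deriv (fun y => mxdot (F y) (G y))
            (fun x v => mxdot (dF x v) (G x) + mxdot (F x) (dG x v)).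
Proof.
move=> HF HG.
have := has_deriv_sum (fun i => has_deriv_sum (fun j => has_derivM (HF i j) (HG i j))).
move/eq_has_deriv; apply=> // x v.
by rewrite /mxdot -big_split; apply: eq_bigr => i _; rewrite -big_split.
Qed.

End ExplicitMatrixDerivative.

Section MatrixCoordinates.
Variable R : realType.

Lemma has_deriv_coord m n i j :
  has_deriv (fun A : 'M[R]_(m, n) => A i j) (fun _ v => v i j).
Proof.
move=> A; split=> [|v]; first exact: differentiable_coord.
have := derive_mx (@derivable_id _ _ A v).
by rewrite derive_id => /matrixP/(_ i j); rewrite mxE.
Qed.

Lemma has_mxderiv_id m n : has_mxderiv (@id 'M[R]_(m, n)) (fun _ v => v).
Proof. exact: has_deriv_coord. Qed.

End MatrixCoordinates.

Section LocalLipschitz.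
Variable R : realType.
Notation M := 'M[R]_3.
Implicit Types f g : M -> R.

(* The constant is required to be nonnegative, which the product rule needs. *)
Definition loclip g := forall x : M, exists r, exists K, 0 < r /\ 0 <= K /\
  forall y z, frob (y - x) < r -> frob (z - x) < r ->
    `|g y - g z| <= K * frob (y - z).

Lemma loclip_locally_lipschitz g : loclip g -> locally_lipschitz g.
Proof. by move=> H x; have [r [K [r0 [_ HK]]]] := H x; exists r, K. Qed.

Lemma loclip_cst c : loclip (fun=> c).
Proof.
by move=> x; exists 1, 0; split => //; split => // y z _ _; rewrite subrr normr0 mul0r.
Qed.

Lemma loclip_coord i j : loclip (fun y : M => y i j).
Proof.
move=> x; exists 1, 1; split => //; split => // y z _ _.
by rewrite mul1r; have := normr_entry_le_frob (y - z) i j; rewrite !mxE.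
Qed.

Lemma loclipD f g : loclip f -> loclip g -> loclip (fun y => f y + g y).
Proof.
move=> Hf Hg x; have [r1 [K1 [r10 [K10 H1]]]] := Hf x.
have [r2 [K2 [r20 [K20 H2]]]] := Hg x.
exists (Order.min r1 r2), (K1 + K2); split; first by rewrite lt_min r10 r20.
split; first by rewrite addr_ge0.
move=> y z; rewrite !lt_min => /andP[y1 y2] /andP[z1 z2].
have -> : f y + g y - (f z + g z) = (f y - f z) + (g y - g z) by ring.
rewrite mulrDl; apply: le_trans (ler_normD _ _) _.
by apply: lerD; [exact: H1 | exact: H2].
Qed.

Lemma loclipN f : loclip f -> loclip (fun y => - f y).
Proof.
move=> Hf x; have [r [K [r0 [K0 H]]]] := Hf x; exists r, K; split => //; split => //.
by move=> y z hy hz; rewrite -opprD normrN; exact: H.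
Qed.

Lemma loclipB f g : loclip f -> loclip g -> loclip (fun y => f y - g y).
Proof. by move=> Hf Hg; apply: loclipD => //; exact: loclipN. Qed.

Lemma lipschitz_ball_bound f (x : M) r K : 0 <= K ->
  (forall y z, frob (y - x) < r -> frob (z - x) < r ->
     `|f y - f z| <= K * frob (y - z)) ->
  forall y, frob (y - x) < r -> `|f y| <= `|f x| + K * r.
Proof.
move=> K0 H y hy.
have hx : frob (x - x) < r by rewrite subrr frob0 (le_lt_trans (frob_ge0 _) hy).
rewrite -(subrK (f x) (f y)) addrC; apply: le_trans (ler_normD _ _) _.
by rewrite lerD2l (le_trans (H y x hy hx)) // ler_wpM2l // ltW.
Qed.

Lemma loclipM f g : loclip f -> loclip g -> loclip (fun y => f y * g y).
Proof.
move=> Hf Hg x; have [r1 [K1 [r10 [K10 H1]]]] := Hf x.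
have [r2 [K2 [r20 [K20 H2]]]] := Hg x.
set Bf := `|f x| + K1 * r1; set Bg := `|g x| + K2 * r2.
have Bf0 : 0 <= Bf by rewrite addr_ge0 ?mulr_ge0 // ltW.
have Bg0 : 0 <= Bg by rewrite addr_ge0 ?mulr_ge0 // ltW.
exists (Order.min r1 r2), (Bf * K2 + Bg * K1); split; first by rewrite lt_min r10 r20.
split; first by rewrite addr_ge0 ?mulr_ge0.
move=> y z; rewrite !lt_min => /andP[y1 y2] /andP[z1 z2].
have -> : f y * g y - f z * g z = f y * (g y - g z) + g z * (f y - f z) by ring.
apply: le_trans (ler_normD _ _) _; rewrite mulrDl !normrM -!mulrA.
apply: lerD; apply: ler_pM => //.
- exact: (lipschitz_ball_bound K10 H1 y1).
- exact: H2.
- exact: (lipschitz_ball_bound K20 H2 z2).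
- exact: H1.
Qed.

Lemma loclip_sum n (F : 'I_n -> M -> R) : (forall k, loclip (F k)) ->
  loclip (fun y => \sum_k F k y).
Proof.
elim: n F => [|n IH] F H.
  by under [X in loclip X]funext => y do rewrite big_ord0; exact: loclip_cst.
under [X in loclip X]funext => y do rewrite big_ord_recr.
by apply: loclipD; [apply: IH => k | exact: H].
Qed.

Lemma normr_invsqrt_sub_le (a p p' : R) : 0 < a -> a <= p -> a <= p' ->
  `|(Num.sqrt p)^-1 - (Num.sqrt p')^-1| <= `|p - p'| / Num.sqrt a ^+ 3.
Proof.
move=> a0 ap ap'.
have p0 : 0 <= p by rewrite (le_trans (ltW a0)).
have p'0 : 0 <= p' by rewrite (le_trans (ltW a0)).
have b0 : 0 < Num.sqrt a by rewrite sqrtr_gt0.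
have bs : Num.sqrt a <= Num.sqrt p by rewrite ler_sqrt.
have bt : Num.sqrt a <= Num.sqrt p' by rewrite ler_sqrt.
rewrite -{2}(sqr_sqrtr p0) -{2}(sqr_sqrtr p'0).
set b := Num.sqrt a in b0 bs bt *; set s := Num.sqrt p in bs *.
set t := Num.sqrt p' in bt *.
have s0 : 0 < s by apply: lt_le_trans bs.
have t0 : 0 < t by apply: lt_le_trans bt.
have -> : s^-1 - t^-1 = (t ^+ 2 - s ^+ 2) / (s * t * (s + t)).
  by field; rewrite ?gt_eqF ?addr_gt0.
rewrite normrM distrC; apply: ler_wpM2l => //.
have stst0 : 0 < s * t * (s + t) by rewrite !mulr_gt0 ?addr_gt0.
rewrite ger0_norm ?invr_ge0 ?(ltW stst0) //.
rewrite lef_pV2 ?posrE ?exprn_gt0 //.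
have -> : b ^+ 3 = b * b * b by ring.
have b0' := ltW b0.
apply: ler_pM; rewrite ?mulr_ge0 //; first exact: ler_pM.
by rewrite (le_trans bs) // lerDl ltW.
Qed.

Lemma loclip_invsqrt g (a : R) : 0 < a -> (forall y, a <= g y) -> loclip g ->
  loclip (fun y => (Num.sqrt (g y))^-1).
Proof.
move=> a0 ag Hg x; have [r [K [r0 [K0 H]]]] := Hg x.
exists r, (K / Num.sqrt a ^+ 3); split => //; split.
  by rewrite divr_ge0 ?exprn_ge0 ?sqrtr_ge0.
move=> y z hy hz; apply: le_trans (normr_invsqrt_sub_le a0 (ag y) (ag z)) _.
by rewrite mulrAC ler_wpM2r ?invr_ge0 ?exprn_ge0 ?sqrtr_ge0 //; exact: H.
Qed.

Definition mxloclip m n (F : M -> 'M[R]_(m, n)) := forall i j, loclip (fun y => F y i j).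

Lemma mxloclip_id : mxloclip id.
Proof. exact: loclip_coord. Qed.

Lemma mxloclip_cst m n (C : 'M[R]_(m, n)) : mxloclip (fun=> C).
Proof. by move=> i j; exact: loclip_cst. Qed.

Lemma mxloclip_tr m n (F : M -> 'M[R]_(m, n)) :
  mxloclip F -> mxloclip (fun y => (F y)^T).
Proof. by move=> H i j; under [X in loclip X]funext => y do rewrite mxE; exact: H. Qed.

Lemma mxloclipD m n (F G : M -> 'M[R]_(m, n)) :
  mxloclip F -> mxloclip G -> mxloclip (fun y => F y + G y).
Proof.
by move=> HF HG i j; under [X in loclip X]funext => y do rewrite mxE; exact: loclipD.
Qed.

Lemma mxloclipB m n (F G : M -> 'M[R]_(m, n)) :
  mxloclip F -> mxloclip G -> mxloclip (fun y => F y - G y).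
Proof.
by move=> HF HG i j; under [X in loclip X]funext => y do rewrite !mxE; exact: loclipB.
Qed.

Lemma mxloclipM m n p (F : M -> 'M[R]_(m, n)) (G : M -> 'M[R]_(n, p)) :
  mxloclip F -> mxloclip G -> mxloclip (fun y => F y *m G y).
Proof.
move=> HF HG i j; under [X in loclip X]funext => y do rewrite mxE.
by apply: loclip_sum => k; exact: loclipM.
Qed.

Lemma loclip_mxdot m n (F G : M -> 'M[R]_(m, n)) :
  mxloclip F -> mxloclip G -> loclip (fun y => mxdot (F y) (G y)).
Proof.
by move=> HF HG; apply: loclip_sum => i; apply: loclip_sum => j; exact: loclipM.
Qed.

End LocalLipschitz.

Section GramDefect.
Variable R : realType.

Definition gram_defect n (X : 'M[R]_n) := X^T *m X - 1%:M.

Definition dgram n (X v : 'M[R]_n) := v^T *m X + X^T *m v.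

Lemma has_mxderiv_gram_defect n : has_mxderiv (@gram_defect n) (@dgram n).
Proof.
have := has_mxderivB (has_mxderivM (has_mxderiv_tr (@has_mxderiv_id R n n))
  (@has_mxderiv_id R n n)) (has_mxderiv_cst (1%:M : 'M[R]_n)).
by move=> H i j; apply: eq_has_deriv (H i j) _ _ => // x v; rewrite subr0.
Qed.

Lemma has_mxderiv_dgram n (v : 'M[R]_n) :
  has_mxderiv (fun X => dgram X v) (fun _ u => dgram u v).
Proof.
have := has_mxderivD (has_mxderivM (has_mxderiv_cst v^T) (@has_mxderiv_id R n n))
  (has_mxderivM (has_mxderiv_tr (@has_mxderiv_id R n n)) (has_mxderiv_cst v)).
move=> H i j; apply: eq_has_deriv (H i j) _ _ => // x u.
by rewrite mul0mx add0r mulmx0 addr0.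
Qed.

Lemma mxtrace_gram_defect n (X : 'M[R]_n) : \tr (gram_defect X) = mxdot X X - n%:R.
Proof.
rewrite /gram_defect raddfB /= mxtrace1; congr (_ - _).
rewrite /mxdot /mxtrace exchange_big; apply: eq_bigr => i _.
by rewrite mxE; apply: eq_bigr => k _; rewrite mxE.
Qed.

Lemma mxloclip_gram_defect : mxloclip (@gram_defect 3).
Proof.
exact: mxloclipB (mxloclipM (mxloclip_tr (@mxloclip_id R)) (@mxloclip_id R))
                 (mxloclip_cst _).
Qed.

Lemma mxloclip_dgram (v : 'M[R]_3) : mxloclip (fun X => dgram X v).
Proof.
exact: mxloclipD (mxloclipM (mxloclip_cst _) (@mxloclip_id R))
                 (mxloclipM (mxloclip_tr (@mxloclip_id R)) (mxloclip_cst _)).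
Qed.

Lemma frob_dgram_le (X v : 'M[R]_3) : frob (dgram X v) <= 2 * (frob X * frob v).
Proof.
apply: le_trans (frobD _ _) _; rewrite mulr2n mulrDl mul1r.
by apply: lerD; apply: le_trans (frob_mulmx _ _) _; rewrite frob_tr // mulrC.
Qed.

End GramDefect.

Section P1Derivatives.
Variables (R : realType) (a : R).
Hypothesis a_gt0 : 0 < a.
Implicit Types X u v : 'M[R]_3.

Definition P1_deriv X v := mxdot (gram_defect X) (dgram X v) / P1 a X.

Definition P1_deriv2 X u v :=
  (mxdot (dgram X u) (dgram X v) + mxdot (gram_defect X) (dgram u v)) / P1 a X
  - mxdot (gram_defect X) (dgram X u) * mxdot (gram_defect X) (dgram X v) / P1 a X ^+ 3.

Lemma P1E X : P1 a X = Num.sqrt (mxdot (gram_defect X) (gram_defect X) + a).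
Proof. by rewrite /P1 frob_sqr. Qed.

Lemma P1_gt0 X : 0 < P1 a X.
Proof. by rewrite sqrtr_gt0 ltr_wpDl ?sqr_ge0. Qed.

Lemma P1_neq0 X : P1 a X != 0.
Proof. by rewrite gt_eqF ?P1_gt0. Qed.

Lemma has_deriv_P1 : has_deriv (P1 a) P1_deriv.
Proof.
have dS := @has_mxderiv_gram_defect R 3.
have := has_deriv_sqrt (has_derivD (has_deriv_mxdot dS dS) (has_deriv_cst a))
  (fun X => ltr_wpDl (mxdotii_ge0 _) a_gt0).
move/eq_has_deriv; apply=> [X|X v]; first by rewrite P1E.
by rewrite -P1E mxdotC /P1_deriv; field; rewrite ?P1_neq0.
Qed.

Lemma has_deriv_P1_deriv v :
  has_deriv (fun X => P1_deriv X v) (fun X u => P1_deriv2 X u v).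
Proof.
have := has_derivM (has_deriv_mxdot (@has_mxderiv_gram_defect R 3) (has_mxderiv_dgram v))
  (has_derivV has_deriv_P1 P1_neq0).
move/eq_has_deriv; apply=> // X u.
by rewrite /P1_deriv2 /P1_deriv; field; rewrite ?P1_neq0.
Qed.

Lemma loclip_P1_deriv2 u v : loclip (fun X => P1_deriv2 X u v).
Proof.
have LS := @mxloclip_gram_defect R.
have inv_P1 : loclip (fun X => (P1 a X)^-1).
  under [X in loclip X]funext => X do rewrite P1E.
  apply: loclip_invsqrt a_gt0 _ _ => [X|]; first by rewrite lerDr mxdotii_ge0.
  exact: loclipD (loclip_mxdot LS LS) (loclip_cst _).
have dot_dgram w : loclip (fun X => mxdot (gram_defect X) (dgram X w)).
  exact: loclip_mxdot LS (mxloclip_dgram w).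
under [X in loclip X]funext => X do rewrite /P1_deriv2 -exprVn exprS expr2.
apply: loclipB; apply: loclipM => //.
- apply: loclipD; first exact: loclip_mxdot (mxloclip_dgram u) (mxloclip_dgram v).
  exact: loclip_mxdot LS (mxloclip_cst _).
- exact: loclipM.
- by apply: loclipM => //; exact: loclipM.
Qed.

End P1Derivatives.

Section P1Curvature.
Variables (R : realType) (a : R).
Hypothesis a_gt0 : 0 < a.
Implicit Types X u v : 'M[R]_3.

Definition gram_const := Num.sqrt 3 + 3 / Num.sqrt a.

Definition curv_const := 2 + 8 * gram_const.

Lemma curv_const_ge0 : 0 <= curv_const.
Proof. by rewrite addr_ge0 ?mulr_ge0 ?addr_ge0 ?divr_ge0 ?sqrtr_ge0. Qed.

Lemma sqr_P1 X : P1 a X ^+ 2 = frob (gram_defect X) ^+ 2 + a.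
Proof. by rewrite sqr_sqrtr // addr_ge0 ?sqr_ge0 ?ltW. Qed.

Lemma frob_gram_defect_le_P1 X : frob (gram_defect X) <= P1 a X.
Proof.
rewrite -ler_sqr ?nnegrE ?frob_ge0 ?sqrtr_ge0 // sqr_P1 lerDl.
exact: ltW.
Qed.

Lemma sqrt_le_P1 X : Num.sqrt a <= P1 a X.
Proof. by rewrite ler_sqrt ?lerDr ?sqr_ge0 // addr_ge0 ?sqr_ge0 ?ltW. Qed.

Lemma sqr_frob_le_P1 X : frob X ^+ 2 <= gram_const * P1 a X.
Proof.
have sa0 : 0 < Num.sqrt a by rewrite sqrtr_gt0.
have trace_le : \tr (gram_defect X) <= Num.sqrt 3 * P1 a X.
  apply: le_trans (ler_norm _) _; apply: le_trans (normr_mxtrace_le _) _.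
  by apply: ler_wpM2l; rewrite ?sqrtr_ge0 ?frob_gram_defect_le_P1.
have three_le : 3 <= 3 / Num.sqrt a * P1 a X.
  by rewrite mulrAC ler_pdivlMr // ler_pM2l ?sqrt_le_P1.
have := mxtrace_gram_defect X; rewrite -frob_sqr mulrDl; lra.
Qed.

Lemma normr_P1_deriv2_le X u v :
  `|P1_deriv2 a X u v| <= curv_const * (frob u * frob v).
Proof.
set P := P1 a X; set s := frob (gram_defect X); set T := frob X ^+ 2.
set N := frob u * frob v.
have P0 : 0 < P := P1_gt0 a_gt0 X.
have [s0 T0 N0] : [/\ 0 <= s, 0 <= T & 0 <= N].
  by rewrite frob_ge0 sqr_ge0 mulr_ge0 ?frob_ge0.
have dgram_mxdot_le A B :
    `|mxdot (dgram X A) (dgram X B)| <= 4 * T * (frob A * frob B).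
  apply: le_trans (normr_mxdot_le _ _) _.
  have -> : 4 * T * (frob A * frob B) =
      (2 * (frob X * frob A)) * (2 * (frob X * frob B)) by rewrite /T; ring.
  exact: ler_pM (frob_ge0 _) (frob_ge0 _) (frob_dgram_le X A) (frob_dgram_le X B).
have defect_dgram_le A B :
    `|mxdot (gram_defect X) (dgram A B)| <= 2 * s * (frob A * frob B).
  apply: le_trans (normr_mxdot_le _ _) _; rewrite [2 * s]mulrC -mulrA.
  by apply: ler_wpM2l => //; exact: frob_dgram_le.
have first_le : `|mxdot (dgram X u) (dgram X v) + mxdot (gram_defect X) (dgram u v)|
    <= (4 * T + 2 * s) * N.
  apply: le_trans (ler_normD _ _) _; rewrite mulrDl.
  exact: lerD (dgram_mxdot_le u v) (defect_dgram_le u v).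
have second_le :
    `|mxdot (gram_defect X) (dgram X u)| * `|mxdot (gram_defect X) (dgram X v)|
    <= 4 * s ^+ 2 * T * N.
  have -> : 4 * s ^+ 2 * T * N =
      (2 * s * (frob X * frob u)) * (2 * s * (frob X * frob v)) by rewrite /T /N; ring.
  exact: ler_pM (normr_ge0 _) (normr_ge0 _) (defect_dgram_le X u) (defect_dgram_le X v).
have x_le1 : s / P <= 1 by rewrite ler_pdivrMr // mul1r frob_gram_defect_le_P1.
have y_le : T / P <= gram_const by rewrite ler_pdivrMr // sqr_frob_le_P1.
have x0 : 0 <= s / P by rewrite divr_ge0 // ltW.
have y0 : 0 <= T / P by rewrite divr_ge0 // ltW.
rewrite /P1_deriv2 -/P; apply: le_trans (ler_normB _ _) _.
rewrite !normrM !normfV (gtr0_norm P0) (gtr0_norm (exprn_gt0 3 P0)).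
have Pinv0 : 0 <= P^-1 by rewrite invr_ge0 ltW.
have P3inv0 : 0 <= (P ^+ 3)^-1 by rewrite invr_ge0 exprn_ge0 // ltW.
apply: le_trans (lerD (ler_wpM2r Pinv0 first_le) (ler_wpM2r P3inv0 second_le)) _.
have -> : (4 * T + 2 * s) * N / P + 4 * s ^+ 2 * T * N / P ^+ 3
    = (4 * (T / P) + 2 * (s / P) + 4 * (s / P) ^+ 2 * (T / P)) * N.
  by field; rewrite gt_eqF.
apply: ler_wpM2r => //; rewrite /curv_const.
have : (s / P) ^+ 2 <= 1 by rewrite expr_le1.
nra.
Qed.

End P1Curvature.

Section SecondOrderBounds.
Variable R : realType.
Implicit Types (f : 'M[R]_3 -> R) (df : 'M[R]_3 -> 'M[R]_3 -> R).
Implicit Types (d2f : 'M[R]_3 -> 'M[R]_3 -> 'M[R]_3 -> R).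

Lemma derive_mxdot_grad f x v : differentiable f x -> 'D_v f x = mxdot v (grad f x).
Proof.
move=> fx; rewrite deriveE // {1}(matrix_sum_delta v) linear_sum.
apply: eq_bigr => i _; rewrite linear_sum; apply: eq_bigr => j _.
by rewrite linearZ /= mxE -deriveE.
Qed.

Lemma grad_lipschitz f df d2f L : 0 <= L -> has_deriv f df ->
  (forall w, has_deriv (fun x => df x w) (fun x u => d2f x u w)) ->
  (forall x u w, d2f x u w <= L * (frob u * frob w)) ->
  forall x x', frob (grad f x - grad f x') <= L * frob (x - x').
Proof.
move=> L0 Hf Hdf Hd2f x x'.
set w := grad f x - grad f x'; set d := x - x'.
have dfE y : df y w = mxdot w (grad f y).
  by have [fy <-] := Hf y; exact: derive_mxdot_grad.
have [c _] := MVT ltr01 (fun s _ => has_deriv_line x' d s (Hdf w))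
  (continuous_subspaceT (has_deriv_line_continuous (x := x') (d := d) (Hdf w))).
rewrite /= scale1r scale0r add0r subrK subr0 mulr1 !dfE -mxdotBr -/w -frob_sqr.
(* [frob w ^+ 2 = 'D_w f x - 'D_w f x'], estimated by the mean value theorem on [x', x]. *)
move=> mvt; have := Hd2f (c *: d + x') d w; rewrite -mvt.
have := frob_ge0 w; have : 0 <= L * frob d by rewrite mulr_ge0 ?frob_ge0.
nra.
Qed.

Lemma convex_fun_deriv2_ge0 f df d2f : has_deriv f df ->
  (forall v, has_deriv (fun x => df x v) (fun x u => d2f x u v)) ->
  (forall x v, 0 <= d2f x v v) -> convex_fun f.
Proof.
move=> Hf Hdf d2f_ge0 y1 y2 t t0 t1.
set d := y2 - y1; set g := fun s : R => f (s *: d + y1).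
have Dg (s : R) : is_derive s 1 g (df (s *: d + y1) d) := has_deriv_line y1 d s Hf.
have DgE : 'D_1 g = fun s => df (s *: d + y1) d.
  by apply/funext => s; have := Dg s => ?; rewrite derive_val.
have DDg (s : R) : is_derive s 1 ('D_1 g) (d2f (s *: d + y1) d d).
  by rewrite DgE; exact: (has_deriv_line y1 d s (Hdf d)).
have DDg_ge0 (s : R) : 0 <= 'D_1 ('D_1 g) s.
  by have := DDg s => ?; rewrite derive_val.
have Dg_ex (s : R) : derivable g s 1 by case: (Dg s).
have DDg_ex (s : R) : derivable ('D_1 g) s 1 by case: (DDg s).
have gc : continuous g := has_deriv_line_continuous (x := y1) (d := d) Hf.
have := second_derivative_convex (fun s _ => DDg_ge0 s)
  (cvg_at_left_filter (gc 1)) (cvg_at_right_filter (gc 0))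
  (fun s _ => Dg_ex s) (fun s _ => DDg_ex s) (Itv01 t0 t1) ler01.
have convE (u v : R) : conv (Itv01 t0 t1) (u : R^o) v = t * u + (1 - t) * v by [].
rewrite !convE /g.
have -> : (t * 0 + (1 - t) * 1) *: d + y1 = t *: y1 + (1 - t) *: y2.
  by apply/matrixP => i j; rewrite /d !mxE; ring.
by rewrite scale0r add0r scale1r subrK.
Qed.

End SecondOrderBounds.

Lemma convex_P1_add_sqr (R : realType) (a : R) : 0 < a ->
  convex_fun (fun X => P1 a X + curv_const a / 2 * frob X ^+ 2).
Proof.
move=> a_gt0; set L := curv_const a.
have id3 := @has_mxderiv_id R 3 3.
have sqr_frob : has_deriv (fun X : 'M[R]_3 => frob X ^+ 2) (fun X v => 2 * mxdot X v).
  apply: eq_has_deriv (has_deriv_mxdot id3 id3) _ _ => [X|X v]; first by rewrite frob_sqr.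
  by rewrite mxdotC mulr2n mulrDl mul1r.
apply: (@convex_fun_deriv2_ge0 _ _ (fun X v => P1_deriv a X v + L * mxdot X v)
  (fun X u v => P1_deriv2 a X u v + L * mxdot u v)).
- have := has_derivD (has_deriv_P1 a_gt0) (has_derivM (has_deriv_cst (L / 2)) sqr_frob).
  by move/eq_has_deriv; apply=> // X v; rewrite mul0r add0r; field.
- move=> v; have := has_derivD (has_deriv_P1_deriv a_gt0 v)
    (has_derivM (has_deriv_cst L) (has_deriv_mxdot id3 (has_mxderiv_cst v))).
  by move/eq_has_deriv; apply=> // X u; rewrite mxdot0r mul0r add0r addr0.
move=> X v; have := normr_P1_deriv2_le a_gt0 X v v.
by rewrite ler_norml -frob_sqr expr2 -/L => /andP[+ _]; rewrite -subr_ge0 opprK.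
Qed.

Theorem lemma9 (R : realType) (a : R) (ha : 0 < a) :
  twice_differentiable (P1 a) /\ second_deriv_locally_lipschitz (P1 a) /\
  exists L : R, curvature_bounded L (P1 a).
Proof.
have dP1 := has_deriv_P1 ha; have d2P1 := has_deriv_P1_deriv ha.
have dP1E v : (fun X => 'D_v (P1 a) X) = (fun X => P1_deriv a X v).
  by apply/funext => X; rewrite (dP1 X).2.
have d2P1E u v :
    (fun X => 'D_u (fun Y => 'D_v (P1 a) Y) X) = (fun X => P1_deriv2 a X u v).
  by rewrite dP1E; apply/funext => X; rewrite (d2P1 v X).2.
split; [split | split].
- by move=> X; case: (dP1 X).
- by move=> v X; rewrite dP1E; case: (d2P1 v X).
- by move=> u v; rewrite d2P1E; exact/loclip_locally_lipschitz/loclip_P1_deriv2.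
exists (curv_const a); split; first exact: convex_P1_add_sqr.
apply: grad_lipschitz (curv_const_ge0 a) dP1 d2P1 _ => X u w.
exact: le_trans (ler_norm _) (normr_P1_deriv2_le ha X u w).
Qed.
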